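(* Let $m\ge 1$ and $0\le k\le m$ be integers. Let $U_1$ be the $2m\times 2m$ integer matrix whose entries in positions $(i,i+1)$ and $(i+1,i)$ ($1\le i\le 2m-1$) are $1$ and all of whose other entries are $0$. For a subset $\alpha\subseteq\{1,\dots,2m\}$, let $U_1(\alpha)$ denote the submatrix of $U_1$ obtained by deleting the rows and columns with indices in $\alpha$. Then $$\sum_{\alpha\subseteq\{1,\dots,2m\},\ |\alpha|=2k}\mathrm{Hf}\big(U_1(\alpha)\big)=\binom{m+k}{m-k}.$$
   Context: For a symmetric matrix $A=(a_{ij})$ of even order $n$ over a commutative ring, the hafnian is $\mathrm{Hf}(A)=\sum a_{i_1i_2}a_{i_3i_4}\cdots a_{i_{n-1}i_n}$, where the sum runs over all partitions of the index set of $A$ into $n/2$ disjoint unordered pairs $\{i_1,i_2\},\dots,\{i_{n-1},i_n\}$ (each partition counted once). The hafnian of the empty ($0\times 0$) matrix is $1$. *)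

From HB Require Import structures.
From mathcomp Require Import all_boot all_order all_algebra.
Set Implicit Arguments. Unset Strict Implicit. Unset Printing Implicit Defensive.
Import GRing.Theory.
Local Open Scope ring_scope.

Definition perfect_matching (n : nat) (P : {set {set 'I_n}}) : bool :=
  partition P [set: 'I_n] && [forall B in P, #|B| == 2%N].

(* Entry a_{ij} of A for an unordered pair B = {i, j} (with i < j). *)
Definition pair_entry (R : comPzRingType) (n : nat) (A : 'M[R]_n)
    (B : {set 'I_n}) : R :=
  \sum_(i in B) \sum_(j in B | (i < j)%N) A i j.

(* Hafnian: sum over all partitions of the index set into unordered pairs
   (each counted once) of the product of the corresponding entries.
   For n = 0 the only matching is the empty one, so Hf = 1. *)
Definition hafnian (R : comPzRingType) (n : nat) (A : 'M[R]_n) : R :=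
  \sum_(P : {set {set 'I_n}} | perfect_matching P) \prod_(B in P) pair_entry A B.

Definition U1 (m : nat) : 'M[int]_(m.*2) :=
  \matrix_(i, j) (((i.+1 == j :> nat) || (j.+1 == i :> nat))%:R : int).

(* U(alpha): delete rows and columns indexed by alpha; the remaining indices
   are kept in increasing order (enum_val enumerates ~: alpha increasingly). *)
Definition del_submx (R : Type) (n : nat) (A : 'M[R]_n) (alpha : {set 'I_n}) :
    'M[R]_(#|~: alpha|) :=
  mxsub (fun i : 'I_#|~: alpha| => enum_val i) (fun j : 'I_#|~: alpha| => enum_val j) A.

From HB Require Import structures.
From mathcomp Require Import all_boot all_order all_algebra.
From mathcomp Require Import zify.
Import GRing.Theory.
Set Implicit Arguments. Unset Strict Implicit. Unset Printing Implicit Defensive.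

(* The hafnian sum of principal minors of the path matrix U_1 counts
   domino packings of a row of 2m cells.

   1. If A is the 0/1 adjacency matrix of a symmetric relation e, each term
      of Hf(A) is 1 or 0 according as every pair of the matching is an edge,
      so Hf(A) is the number of perfect matchings made of edges of e.
   2. Deleting the rows/columns alpha from U_1 yields the adjacency matrix of
      the path restricted to ~: alpha (renumbered by enum_val); transporting
      matchings along the injection enum_val, Hf(U_1(alpha)) is the number of
      tilings of the cell set ~: alpha by dominoes {u, u+1}.
   3. Summing over all alpha with |alpha| = 2k groups the domino packings of
      the 2m cells with m - k dominoes according to their uncovered cells.
   4. Packings of the first n cells by j dominoes satisfy the Fibonacci-type
      recursion p(n+2, j+1) = p(n+1, j+1) + p(n, j) (split on whether the
      domino {n, n+1} is used), hence p(n, j) = C(n - j, j); with n = 2m and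
      j = m - k this is C(m + k, m - k). *)

Definition is_edge (T : finType) (e : rel T) (B : {set T}) : bool :=
  [exists u, exists v, e u v && (B == [set u; v])].

Lemma is_edge2 (T : finType) (e : rel T) (a b : T) :
  symmetric e -> a != b -> is_edge e [set a; b] = e a b.
Proof.
move=> e_sym nab; apply/existsP/idP => [[u /existsP[v /andP[euv /eqP eab]]]|eab].
  have : a \in [set u; v] by rewrite -eab !inE eqxx.
  have : b \in [set u; v] by rewrite -eab !inE eqxx orbT.
  rewrite !inE => /orP[]/eqP eb /orP[]/eqP ea; move: nab; rewrite ea eb ?eqxx //.
  by rewrite e_sym.
by exists a; apply/existsP; exists b; rewrite eab eqxx.
Qed.

Lemma is_edge_imset (aT rT : finType) (f : aT -> rT) (e : rel rT) (B : {set aT}) :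
  injective f -> is_edge (fun i j => e (f i) (f j)) B = is_edge e (f @: B).
Proof.
move=> f_inj; apply/existsP/existsP.
  case=> i /existsP[j /andP[eij /eqP->]].
  by exists (f i); apply/existsP; exists (f j); rewrite eij imsetU1 imset_set1 eqxx.
case=> u /existsP[v /andP[euv /eqP fB]].
have /imsetP[i iB eu] : u \in f @: B by rewrite fB !inE eqxx.
have /imsetP[j jB ev] : v \in f @: B by rewrite fB !inE eqxx orbT.
exists i; apply/existsP; exists j; rewrite -eu -ev euv; apply/eqP/(imset_inj f_inj).
by rewrite /= fB imsetU1 imset_set1 eu ev.
Qed.

Section Transport.
Variables (T : finType) (n : nat) (f : 'I_n -> T) (p : pred {set T}).
Hypotheses (f_inj : injective f) (p_card2 : forall B, p B -> #|B| = 2%N).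

Lemma imset_preimset (B : {set T}) : B \subset f @: setT -> f @: (f @^-1: B) = B.
Proof.
move=> sBf; apply/eqP; rewrite eqEsubset sub_imset_pre subxx /=.
by apply/subsetP => x xB; have /imsetP[i _ def_x] := subsetP sBf x xB;
  rewrite def_x imset_f // inE -def_x.
Qed.

Lemma card_matchings_transport :
  #|[set P : {set {set 'I_n}} | perfect_matching P && [forall B in P, p (f @: B)]]| =
  #|[set Q : {set {set T}} | [&& trivIset Q, [forall B in Q, p B] & cover Q == f @: setT]]|.
Proof.
rewrite -(card_imset _ (imset_inj (imset_inj f_inj))); apply: eq_card => Q.
rewrite inE; apply/imsetP/and3P.
  case=> P; rewrite inE => /andP[/andP[pmP _] /forall_inP pP] ->.
  have /and3P[cQ tQ _] : partition [set f @: B | B : {set 'I_n} in P] (f @: setT).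
    by rewrite imset_partition.
  by split=> //; apply/forall_inP => _ /imsetP[B BP ->]; exact: pP.
case=> tQ /forall_inP pQ /eqP cQ.
have Q0 : set0 \notin Q by apply/negP => /pQ/p_card2; rewrite cards0.
have sBf B : B \in Q -> B \subset f @: setT by rewrite -cQ => BQ; apply: bigcup_sup.
have eQ : [set f @: B | B : {set 'I_n} in [set f @^-1: B | B : {set T} in Q]] = Q.
  rewrite -imset_comp (eq_in_imset (g := id)) ?imset_id // => B /sBf.
  exact: imset_preimset.
exists [set f @^-1: B | B : {set T} in Q]; last by rewrite eQ.
rewrite inE /perfect_matching -andbA; apply/and3P; split.
- by rewrite -(imset_partition _ _ f_inj) eQ /partition cQ tQ Q0 eqxx.
- apply/forall_inP => _ /imsetP[B BQ ->].
  by rewrite -(card_imset _ f_inj) imset_preimset ?p_card2 ?pQ ?sBf.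
- by apply/forall_inP => _ /imsetP[B BQ ->]; rewrite imset_preimset ?pQ ?sBf.
Qed.

End Transport.

Lemma imset_enum_val (T : finType) (A : {set T}) :
  [set enum_val i | i : 'I_#|A| in setT] = A.
Proof.
apply/setP => x; apply/imsetP/idP => [[i _ ->]|xA]; first exact: enum_valP.
by exists (enum_rank_in xA x); rewrite ?enum_rankK_in.
Qed.

Section DominoPackings.
Variable K : nat.
Implicit Types (u v : 'I_K) (B : {set 'I_K}) (Q : {set {set 'I_K}}).

Definition adjacent u v : bool := (u.+1 == v :> nat) || (v.+1 == u :> nat).

Definition domino B : bool := is_edge adjacent B.

Lemma dominoP B :
  reflect (exists u v, u.+1 = v :> nat /\ B = [set u; v]) (domino B).
Proof.
apply: (iffP existsP) => [[u /existsP[v /andP[/orP[] /eqP uv /eqP ->]]]|].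
- by exists u, v.
- by exists v, u; rewrite setUC.
- by case=> u [v [uv ->]]; exists u; apply/existsP; exists v; rewrite /adjacent uv !eqxx.
Qed.

Lemma domino_card B : domino B -> #|B| = 2.
Proof.
case/dominoP=> u [v [uv ->]]; rewrite cards2.
by case: eqP => // eq_uv; move: uv; rewrite eq_uv; lia.
Qed.

Definition lows (n : nat) : {set 'I_K} := [set x : 'I_K | x < n].

Definition packing Q : bool := trivIset Q && [forall B in Q, domino B].

Definition packings (n j : nat) : {set {set {set 'I_K}}} :=
  [set Q | [&& packing Q, cover Q \subset lows n & #|Q| == j]].

Lemma packing_domino Q B : packing Q -> B \in Q -> domino B.
Proof. by case/andP=> _ /forallP/(_ B)/implyP. Qed.

(* Dominoes are nonempty, so a packing partitions the cells it covers. *)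
Lemma packing_partition Q : packing Q -> partition Q (cover Q).
Proof.
move=> pQ; rewrite /partition eqxx (andP pQ).1 /=.
by apply/negP => /(packing_domino pQ)/domino_card; rewrite cards0.
Qed.

Lemma packing_cover_card Q : packing Q -> #|cover Q| = #|Q|.*2.
Proof.
move=> pQ; rewrite -muln2; apply: card_uniform_partition (packing_partition pQ).
by move=> B /(packing_domino pQ)/domino_card.
Qed.

Lemma packing_sub Q Q' : Q' \subset Q -> packing Q -> packing Q'.
Proof.
move=> sQ'Q pQ; rewrite /packing (trivIsetS sQ'Q (andP pQ).1).
by apply/forallP => B; apply/implyP => /(subsetP sQ'Q)/(packing_domino pQ).
Qed.

Lemma packings0 n : packings n 0 = [set set0].
Proof.
apply/setP => Q; rewrite !inE; apply/idP/eqP => [/and3P[_ _ /eqP/cards0_eq] //|->].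
rewrite cards0 eqxx /packing /trivIset /cover !big_set0 sub0set cards0 /=.
by rewrite andbT; apply/forallP => B; rewrite inE.
Qed.

Lemma packings_small n j : n <= 1 -> packings n j.+1 = set0.
Proof.
move=> n_le1; apply/setP => Q; rewrite !inE; apply/negP => /and3P[pQ cQ /eqP cardQ].
have [B BQ] : exists B, B \in Q by apply/set0Pn; rewrite -card_gt0 cardQ.
have /dominoP[u [v [uv eB]]] := packing_domino pQ BQ.
have : B \subset lows n by move/bigcupsP: cQ; apply.
by move/subsetP/(_ v); rewrite eB !inE eqxx orbT => /(_ isT); lia.
Qed.

(* The recursion step: split the packings of the first n+2 cells according to
   whether they use the last domino d = {n, n+1}. *)
Section LastDomino.
Variable n : nat.
Hypothesis n1_lt_K : n.+1 < K.

Let x : 'I_K := Ordinal (ltnW n1_lt_K).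
Let y : 'I_K := Ordinal n1_lt_K.
Let d : {set 'I_K} := [set x; y].

Lemma domino_d : domino d.
Proof. by apply/dominoP; exists x, y. Qed.

Lemma d_notin_lows : ~~ (d \subset lows n.+1).
Proof. by apply/subsetPn; exists y; rewrite !inE ?eqxx ?orbT /= ?ltnn. Qed.

Lemma disjoint_d_lows : [disjoint d & lows n].
Proof. by rewrite disjoint_subset; apply/subsetP => z; rewrite !inE => /orP[]/eqP->/=; lia. Qed.

Lemma d_sub_lows : d \subset lows n.+2.
Proof. by apply/subsetP => z; rewrite !inE => /orP[]/eqP->/=. Qed.

Lemma domino_lows_split B :
  domino B -> B \subset lows n.+2 -> (B \subset lows n.+1) || (B == d).
Proof.
case/dominoP=> u [v [uv ->]] /subsetP/(_ v); rewrite !inE eqxx orbT => /(_ isT) vlt.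
have [vn1|vn1] := eqVneq (v : nat) n.+1; last first.
  by apply/orP; left; apply/subsetP => z; rewrite !inE => /orP[]/eqP->; lia.
apply/orP; right; apply/eqP; congr [set _; _]; apply: val_inj => /=; lia.
Qed.

Lemma domino_lows_disjoint B :
  domino B -> B \subset lows n.+2 -> [disjoint B & d] -> B \subset lows n.
Proof.
case/dominoP=> u [v [uv eB]] /subsetP/(_ v); rewrite eB !inE eqxx orbT => /(_ isT) vlt.
move=> dis; have vB : v \in [set u; v] by rewrite !inE eqxx orbT.
have : v \notin d by rewrite (disjointFr dis vB).
rewrite !inE negb_or -!(inj_eq val_inj) /= => /andP[vx vy].
by apply/subsetP => z; rewrite !inE => /orP[]/eqP->; lia.
Qed.

Lemma packings_without_d j :
  [set Q in packings n.+2 j | d \notin Q] = packings n.+1 j.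
Proof.
apply/setP => Q; rewrite !inE; apply/idP/idP.
  case/andP=> /and3P[pQ cQ ->] dQ; rewrite pQ andbT; apply/bigcupsP => B BQ.
  have /orP[//|/eqP eBd] := domino_lows_split (packing_domino pQ BQ) (bigcupsP cQ B BQ).
  by rewrite -eBd BQ in dQ.
case/and3P=> pQ cQ ->; rewrite pQ andbT /=; apply/andP; split.
  by apply: (subset_trans cQ); apply/subsetP => z; rewrite !inE; lia.
by apply/negP => dQ; have := d_notin_lows; rewrite (bigcupsP cQ d dQ).
Qed.

(* Removing d is a bijection from the packings using d onto the packings of
   the first n cells by one domino less. *)
Lemma card_packings_with_d j :
  #|[set Q in packings n.+2 j.+1 | d \in Q]| = #|packings n j|.
Proof.
have d_notin Q : Q \in packings n j -> d \notin Q.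
  rewrite inE => /and3P[_ cQ _]; apply: contraTN isT => dQ.
  have /disjoint_setI0 := disjoint_d_lows.
  by rewrite (setIidPl (bigcupsP cQ d dQ)) => /eqP; rewrite -cards_eq0 cards2.
rewrite -(card_in_imset (f := fun Q => d |: Q) (D := packings n j)); last first.
  by move=> Q1 Q2 /d_notin Q1d /d_notin Q2d /= eQ; rewrite -(setU1K Q1d) eQ setU1K.
apply: eq_card => Q; rewrite !inE; apply/andP/imsetP.
  case=> /and3P[pQ cQ /eqP cardQ] dQ; exists (Q :\ d); last by rewrite setD1K.
  rewrite inE (packing_sub (subD1set Q d) pQ) /=; apply/andP; split.
    apply/bigcupsP => B; rewrite !inE => /andP[Bd BQ].
    apply: domino_lows_disjoint (packing_domino pQ BQ) (bigcupsP cQ B BQ) _.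
    by move/trivIsetP: (andP pQ).1; apply.
  by move: cardQ; rewrite (cardsD1 d Q) dQ add1n => -[->].
case=> Q' Q'_pk ->; have := Q'_pk; rewrite inE => /and3P[pQ' cQ' /eqP cardQ'].
have dis : {in Q', forall B, [disjoint d & B]}.
  move=> B BQ'; apply: disjointWr (bigcupsP cQ' B BQ') disjoint_d_lows.
have Q'0 : set0 \notin Q' by have /and3P[] := packing_partition pQ'.
have [tU _] := trivIsetU1 dis (andP pQ').1 Q'0.
rewrite setU11 cardsU1 (d_notin _ Q'_pk) cardQ' add1n eqxx andbT; split=> //; apply/andP; split.
  rewrite /packing tU; apply/forallP => B; rewrite !inE.
  by apply/implyP => /orP[/eqP->|/(packing_domino pQ')//]; apply: domino_d.
apply/bigcupsP => B; rewrite !inE => /orP[/eqP->|BQ']; first exact: d_sub_lows.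
by apply: (subset_trans (bigcupsP cQ' B BQ')); apply/subsetP => z; rewrite !inE; lia.
Qed.

Lemma card_packings_rec j :
  #|packings n.+2 j.+1| = #|packings n.+1 j.+1| + #|packings n j|.
Proof.
rewrite -(cardsID [set Q : {set {set 'I_K}} | d \in Q]) addnC.
rewrite -packings_without_d -card_packings_with_d.
by congr addn; apply: eq_card => Q; rewrite !inE andbC.
Qed.

End LastDomino.

Lemma card_packings n j : n <= K -> #|packings n j| = 'C(n - j, j).
Proof.
elim/ltn_ind: n j => n IH j n_le_K.
case: j => [|j]; first by rewrite packings0 cards1 bin0.
case: n IH n_le_K => [|[|n]] IH n_le_K; try by rewrite packings_small ?cards0.
rewrite card_packings_rec // !IH //; try lia.
rewrite !subSS; have [j_le_n|n_lt_j] := leqP j n; first by rewrite (subSn j_le_n) binS.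
have -> : (n.+1 - j = 0)%N by lia.
have -> : (n - j = 0)%N by lia.
by rewrite !bin0n; case: j n_lt_j.
Qed.

Definition tilings (S : {set 'I_K}) : {set {set {set 'I_K}}} :=
  [set Q | packing Q && (cover Q == S)].

(* Grouping the packings of all K cells by j dominoes according to the set of
   (K - 2j) cells they leave uncovered. *)
Lemma sum_card_tilings j : j.*2 <= K ->
  \sum_(alpha : {set 'I_K} | #|alpha| == K - j.*2) #|tilings (~: alpha)| =
  #|packings K j|.
Proof.
move=> j2_le_K; rewrite -sum1_card.
rewrite (partition_big (fun Q => ~: cover Q) (fun alpha => #|alpha| == K - j.*2)).
  apply: eq_bigr => alpha /eqP card_alpha; rewrite -sum1_card; apply: eq_bigl => Q.
  rewrite !inE; apply/andP/andP => [[pQ /eqP cQ]|[/and3P[pQ _ _] /eqP <-]].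
    split; last by rewrite cQ setCK.
    rewrite pQ /=; apply/andP; split; first by apply/subsetP => z _; rewrite inE.
    have := cardsC alpha; rewrite -cQ packing_cover_card // card_ord card_alpha.
    move/eqP; rewrite -[X in _ == X](subnK j2_le_K) eqn_add2l.
    by rewrite (inj_eq (can_inj doubleK)).
  by rewrite setCK.
move=> Q; rewrite inE => /and3P[pQ _ /eqP cardQ].
have := cardsC (cover Q); rewrite packing_cover_card // card_ord cardQ.
by move=> /(canRL (addKn _)) ->.
Qed.

Lemma adjacent_sym : symmetric adjacent.
Proof. by move=> u v; rewrite /adjacent orbC. Qed.

End DominoPackings.

Local Open Scope ring_scope.

Lemma pair_entry2 (R : comPzRingType) (n : nat) (A : 'M[R]_n) (a b : 'I_n) :
  (a < b)%N -> pair_entry A [set a; b] = A a b.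
Proof.
move=> lt_ab; have a_notin_b : a \notin [set b] by rewrite inE neq_ltn lt_ab.
rewrite /pair_entry big_setU1 //= big_set1 !big_mkcondr /= !big_setU1 //= !big_set1.
by rewrite !ltnn lt_ab ltnNge (ltnW lt_ab) /= !add0r addr0.
Qed.

Definition adjmx (R : comPzRingType) (n : nat) (e : rel 'I_n) : 'M[R]_n :=
  \matrix_(i, j) (e i j)%:R.

Section AdjacencyHafnian.
Variables (R : comPzRingType) (n : nat) (e : rel 'I_n).
Hypothesis e_sym : symmetric e.

Lemma pair_entry_adjmx (B : {set 'I_n}) :
  #|B| == 2%N -> pair_entry (adjmx R e) B = (is_edge e B)%:R.
Proof.
case/cards2P=> a [b [nab ->]].
wlog lt_ab : a b nab / (a < b)%N => [wlog_ab|].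
  have [/wlog_ab->//|lt_ba|eq_ab] := ltngtP a b; last by rewrite (val_inj eq_ab) eqxx in nab.
  by rewrite setUC wlog_ab // eq_sym.
by rewrite pair_entry2 // is_edge2 // mxE.
Qed.

Lemma hafnian_adjmx :
  hafnian (adjmx R e) =
  #|[set P | perfect_matching P && [forall B in P, is_edge e B]]|%:R.
Proof.
rewrite /hafnian (eq_bigr (fun P : {set {set 'I_n}} => ([forall B in P, is_edge e B] : nat)%:R)).
  rewrite -natr_sum -sum1_card; congr _%:R.
  rewrite [LHS]big_mkcond [RHS]big_mkcond; apply: eq_bigr => P _.
  by rewrite inE; case: (perfect_matching P); case: [forall B in P, is_edge e B].
move=> P /andP[_ /forall_inP P2].
rewrite (eq_bigr (fun B => (is_edge e B)%:R)) => [|B /P2]; last exact: pair_entry_adjmx.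
have [/forall_inP all_e | /forall_inPn[B BP not_e]] := boolP [forall B in P, is_edge e B].
  by rewrite big1 // => B /all_e ->.
by rewrite (bigD1 B) //= (negbTE not_e) mul0r.
Qed.

End AdjacencyHafnian.

Section DeletedPath.
Variables (m : nat) (alpha : {set 'I_(m.*2)}).

Lemma del_submx_U1 :
  del_submx (U1 m) alpha =
  adjmx int (fun i j : 'I_#|~: alpha| => adjacent (enum_val i) (enum_val j)).
Proof. by apply/matrixP => i j; rewrite !mxE. Qed.

Lemma hafnian_del_U1 :
  hafnian (del_submx (U1 m) alpha) = #|tilings (~: alpha)|%:R.
Proof.
rewrite del_submx_U1 hafnian_adjmx; last by move=> i j; rewrite adjacent_sym.
congr _%:R; set f := enum_val : 'I_#|~: alpha| -> 'I_(m.*2).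
transitivity #|[set P | perfect_matching P && [forall B in P, domino (f @: B)]]|.
  apply: eq_card => P; rewrite !inE; congr (_ && _); apply: eq_forallb_in => B _.
  exact: is_edge_imset enum_val_inj.
rewrite (card_matchings_transport enum_val_inj (@domino_card _)) imset_enum_val.
by apply: eq_card => Q; rewrite !inE andbA.
Qed.

End DeletedPath.

Theorem mainTheorem3 (m k : nat) (hm : (1 <= m)%N) (hk : (k <= m)%N) :
  \sum_(alpha : {set 'I_(m.*2)} | #|alpha| == k.*2) hafnian (del_submx (U1 m) alpha)
  = ('C(m + k, m - k))%:R.
Proof.
rewrite (eq_bigr _ (fun alpha _ => hafnian_del_U1 alpha)) -natr_sum.
have -> : k.*2 = (m.*2 - (m - k).*2)%N by rewrite -!muln2; lia.
rewrite sum_card_tilings ?card_packings //; last by rewrite leq_double leq_subr.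
by congr _%:R; congr 'C(_, _); rewrite -muln2; lia.
Qed.
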